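(* Let $r,s,t,\ell,m$ be integers with $1 \le t \le \ell \le m$, $1 \le r \le \ell$ and $1 \le s \le t$. Then $$\mathfrak{w}_r^{(s)}(t;\ell,m) = \frac{q-1}{q}\,q^{\binom{s}{2}}\left(\frac{[m]_q!}{[m-t]_q!} - (-1)^s \frac{[m-s]_q!}{[m-t]_q!} \right)q^{s(\ell-r)}\,q^{\binom{t-s}{2}}\,{r\brack s}_q {\ell-r\brack t-s}_q.$$
   Context: $q$ is a prime power. For an $\ell\times m$ matrix $M=(m_{ij})$ over $\mathbb{F}_q$ and $1\le r\le\ell$, $\tau_r(M)=m_{11}+\cdots+m_{rr}$ and $\underline{M}_r$ is the $r\times m$ matrix of the first $r$ rows of $M$. $\mathfrak w^{(s)}_r(t;\ell,m)$ is the number of $\ell\times m$ matrices $M$ over $\mathbb{F}_q$ with $\mathrm{rk}(M)=t$, $\mathrm{rk}(\underline{M}_r)=s$ and $\tau_r(M)\ne 0$. The Gaussian factorial is $[n]_q!=\prod_{i=1}^n(q^i-1)$ (with $[0]_q!=1$), and ${n\brack k}_q$ is the Gaussian binomial coefficient, equal to $0$ if $k<0$ or $k>n$. *)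

From HB Require Import structures.
From mathcomp Require Import all_boot all_order all_algebra all_field.
Set Implicit Arguments. Unset Strict Implicit. Unset Printing Implicit Defensive.
Import Order.TTheory GRing.Theory Num.Theory.
Local Open Scope ring_scope.

Definition top_rows (F : Type) (l m r : nat) (hr : (r <= l)%N)
  (M : 'M[F]_(l, m)) : 'M[F]_(r, m) := rowsub (widen_ord hr) M.

Definition tau (F : nzRingType) (l m r : nat) (hr : (r <= l)%N) (hrm : (r <= m)%N)
  (M : 'M[F]_(l, m)) : F := \sum_(i < r) M (widen_ord hr i) (widen_ord hrm i).

Definition wcount (F : finFieldType) (r s t l m : nat) (hr : (r <= l)%N)
  (hrm : (r <= m)%N) : nat :=
  #|[set M : 'M[F]_(l, m) | [&& \rank M == t,
        \rank (top_rows hr M) == s & tau hr hrm M != 0]]|.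

Definition gfact (q n : nat) : rat := \prod_(1 <= i < n.+1) ((q ^ i)%:R - 1).

Definition gbinom (q n k : nat) : rat :=
  if (k <= n)%N then gfact q n / (gfact q k * gfact q (n - k)) else 0.

From HB Require Import structures.
From mathcomp Require Import all_boot all_order all_algebra all_field.
From mathcomp Require Import ring zify.
Set Implicit Arguments. Unset Strict Implicit. Unset Printing Implicit Defensive.
Import Order.TTheory GRing.Theory Num.Theory.
Local Open Scope ring_scope.

(* The
   proof builds matrices one row at a time.
   - Appending a row u to an n x m matrix A raises the rank exactly when u
     lies outside the row space of A, which has q^(rank A) elements.  So any
     sum, over rank-k (n+1) x m matrices, of a function of their first n rows
     obeys a two-term recursion in n (sum_rank_append).
   - Starting this recursion at n = r gives w as the product of the number N
     of rank-s r x m matrices with nonzero trace and an explicit q-factor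
     (wsum_closed).
   - N = ((q-1) R - E) / q, where R counts the rank-s r x m matrices and E is
     the sum over them of q [tau = 0] - 1 (nz_trace_countE).  R follows from
     the same recursion (rank_count_closed).  For E, summing over the last
     row of a square matrix cancels everything unless the last column of the
     remaining rows vanishes (sum_bias_append_row); this yields a recursion
     for square matrices (trace_bias_square_step), and rows or columns beyond
     the trace window do not change E (trace_bias_wide).
   The theorem then follows by rewriting falling q-products as quotients of
   Gaussian factorials and normalising the resulting field expression. *)

Lemma sumr_const_pred (T : finType) (P : pred T) (c : rat) :
  \sum_(i | P i) c = c * #|[set i | P i]|%:R.
Proof.
rewrite sumr_const mulr_natr; congr (_ *+ _).
by apply: eq_card => i; rewrite inE.
Qed.

Lemma sum_pred_weight (T : finType) (P : pred T) (f : T -> rat) :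
  \sum_(i | P i) f i = \sum_i (P i)%:R * f i.
Proof.
by rewrite big_mkcond; apply: eq_bigr => i _; case: (P i); rewrite ?mul1r ?mul0r.
Qed.

(* Algebra of Gaussian factorials and binomials at x = q, for an integer q > 1. *)
Section GaussianCoefficients.
Variable q : nat.
Hypothesis q_gt1 : (1 < q)%N.
Local Notation x := (q%:R : rat).

Lemma qpow_sub1_neq0 i : (0 < i)%N -> x ^+ i - 1 != 0.
Proof.
move=> i_gt0; rewrite subr_eq0 -natrX pnatr_eq1.
by rewrite -(exp1n i) eqn_exp2r // neq_ltn q_gt1 orbT.
Qed.

Lemma gfact0 : gfact q 0 = 1.
Proof. by rewrite /gfact big_geq. Qed.

Lemma gfactS n : gfact q n.+1 = gfact q n * (x ^+ n.+1 - 1).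
Proof. by rewrite /gfact big_nat_recr //= natrX. Qed.

Lemma gfact_neq0 n : gfact q n != 0.
Proof.
elim: n => [|n IH]; first by rewrite gfact0 oner_eq0.
by rewrite gfactS mulf_neq0 // qpow_sub1_neq0.
Qed.

Lemma gbinom0 n : gbinom q n 0 = 1.
Proof. by rewrite /gbinom leq0n subn0 gfact0 mul1r divff // gfact_neq0. Qed.

Lemma gbinomnn n : gbinom q n n = 1.
Proof. by rewrite /gbinom leqnn subnn gfact0 mulr1 divff // gfact_neq0. Qed.

Lemma gbinom_gt n k : (n < k)%N -> gbinom q n k = 0.
Proof. by rewrite /gbinom ltnNge => /negbTE ->. Qed.

Lemma gbinom_split k a :
  gbinom q (k + a) k = gfact q (k + a) / (gfact q k * gfact q a).
Proof. by rewrite /gbinom leq_addr addKn. Qed.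

Lemma gbinom_pascal n k :
  gbinom q n.+1 k.+1 = x ^+ k.+1 * gbinom q n k.+1 + gbinom q n k.
Proof.
case: (ltngtP k n) => [kn|nk|->]; last first.
- by rewrite !gbinomnn gbinom_gt // mulr0 add0r.
- by rewrite !gbinom_gt ?mulr0 ?addr0 // ltnS ltnW.
have [a ->] : exists a, n = (k + a.+1)%N.
  by exists (n - k.+1)%N; rewrite addnS -addSn subnKC.
have -> : gbinom q (k + a.+1).+1 k.+1 =
          gfact q (k + a.+1).+1 / (gfact q k.+1 * gfact q a.+1).
  by rewrite -addSn gbinom_split addSn.
have -> : gbinom q (k + a.+1) k.+1 = gfact q (k + a.+1) / (gfact q k.+1 * gfact q a).
  by rewrite -addSnnS gbinom_split addSnnS.
rewrite gbinom_split !gfactS.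
have -> : x ^+ (k + a.+1).+1 = x ^+ k.+1 * x ^+ a.+1 by rewrite -exprD addSn.
have := gfact_neq0 k; have := gfact_neq0 a.
have := qpow_sub1_neq0 (ltn0Sn k); have := qpow_sub1_neq0 (ltn0Sn a).
move: (gfact q k) (gfact q a) (gfact q (k + a.+1)) (x ^+ k.+1) (x ^+ a.+1).
by move=> Gk Ga Gn X Y Y1 X1 Ga0 Gk0; field; rewrite ?Y1 ?X1 ?Ga0 ?Gk0.
Qed.

Lemma gbinom_ratio r k :
  (x ^+ k.+1 - 1) * gbinom q r k.+1 = (x ^+ (r - k) - 1) * gbinom q r k.
Proof.
case: (leqP r k) => [rk|kr].
  by rewrite gbinom_gt ?ltnS // mulr0 (eqP rk) expr0 subrr mul0r.
have [a ->] : exists a, r = (k + a.+1)%N.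
  by exists (r - k.+1)%N; rewrite addnS -addSn subnKC.
have -> : gbinom q (k + a.+1) k.+1 = gfact q (k + a.+1) / (gfact q k.+1 * gfact q a).
  by rewrite -addSnnS gbinom_split addSnnS.
rewrite gbinom_split addKn !gfactS.
have := gfact_neq0 k; have := gfact_neq0 a.
have := qpow_sub1_neq0 (ltn0Sn k); have := qpow_sub1_neq0 (ltn0Sn a).
move: (gfact q k) (gfact q a) (gfact q (k + a.+1)) (x ^+ k.+1) (x ^+ a.+1).
by move=> Gk Ga Gn X Y Y1 X1 Ga0 Gk0; field; rewrite ?Y1 ?X1 ?Ga0 ?Gk0.
Qed.

(* Falling q-product (q^b - 1)(q^b - q)...(q^b - q^(k-1)): the number of
   k-tuples of independent vectors in F_q^b. *)
Definition qfall b k : rat := \prod_(i < k) (x ^+ b - x ^+ i).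

Lemma qfallS b k : qfall b k.+1 = qfall b k * (x ^+ b - x ^+ k).
Proof. by rewrite /qfall big_ord_recr. Qed.

Lemma qfallE b k : (k <= b)%N -> qfall b k = x ^+ 'C(k, 2) * (gfact q b / gfact q (b - k)).
Proof.
elim: k => [|k IH] kb.
  by rewrite /qfall big_ord0 bin0n expr0 subn0 mul1r divff // gfact_neq0.
rewrite qfallS IH ?(ltnW kb) //.
have [c bk] : exists c, (b - k = c.+1)%N by exists (b - k.+1)%N; rewrite subnSK.
have -> : (b - k.+1 = c)%N by rewrite subnS bk.
have -> : x ^+ b = x ^+ k * x ^+ c.+1 by rewrite -exprD -bk subnKC // ltnW.
rewrite bk gfactS binS bin1 exprD.
have := gfact_neq0 c; have := qpow_sub1_neq0 (ltn0Sn c).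
move: (gfact q b) (gfact q c) (x ^+ 'C(k, 2)) (x ^+ k) (x ^+ c.+1).
by move=> Gb Gc Z X Y Y1 Gc0; field; rewrite ?Y1 ?Gc0.
Qed.
End GaussianCoefficients.

(* Row spaces over a finite field and the effect of appending a row. *)
Section RowSpaces.
Variable F : finFieldType.
Local Notation q := #|F|.

Lemma card_rowspace n m (A : 'M[F]_(n, m)) :
  #|[set u : 'rV[F]_m | (u <= A)%MS]| = (q ^ \rank A)%N.
Proof.
have -> : [set u : 'rV[F]_m | (u <= A)%MS] =
          [set v *m row_base A | v in [set: 'rV[F]_(\rank A)]].
  apply/setP => u; rewrite inE; apply/idP/imsetP.
    by rewrite -(eq_row_base A) => /submxP [v ->]; exists v; rewrite ?inE.
  by move=> [v _ ->]; rewrite -(eq_row_base A) submxMl.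
rewrite card_imset; last exact: row_free_inj (row_base_free A).
by rewrite cardsT card_mx mul1n.
Qed.

Lemma card_not_rowspace n m (A : 'M[F]_(n, m)) :
  #|[set u : 'rV[F]_m | ~~ (u <= A)%MS]| = (q ^ m - q ^ \rank A)%N.
Proof.
have := cardsC [set u : 'rV[F]_m | (u <= A)%MS].
rewrite card_rowspace card_mx mul1n => <-.
by rewrite addKn; apply: eq_card => u; rewrite !inE.
Qed.

Lemma rank_col_mx_row n m (A : 'M[F]_(n, m)) (u : 'rV[F]_m) :
  \rank (col_mx A u) = (\rank A + ~~ (u <= A)%MS)%N.
Proof.
rewrite -addsmxE; have [uA|nuA] := boolP (u <= A)%MS.
  by rewrite addn0; have /addsmx_idPl -> := uA.
have u0 : u != 0 by apply: contraNneq nuA => ->; rewrite sub0mx.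
have cap0 : \rank (A :&: u)%MS = 0%N.
  have : (\rank (A :&: u)%MS < \rank u)%N.
    rewrite (ltn_leqif (mxrank_leqif_sup (capmxSr A u))).
    by rewrite sub_capmx submx_refl andbT.
  by rewrite rank_rV u0 ltnS leqn0 => /eqP.
by have := mxrank_sum_cap A u; rewrite rank_rV u0 cap0 addn0 addn1.
Qed.

Lemma sum_rank_col_mx n m (C : 'M[F]_(n, m)) (k : nat) (h : 'rV[F]_m -> rat) :
  \sum_(u | \rank (col_mx C u) == k) h u =
    (\rank C == k)%:R * \sum_(u | (u <= C)%MS) h u
  + ((\rank C).+1 == k)%:R * \sum_(u | ~~ (u <= C)%MS) h u.
Proof.
under eq_bigl do rewrite rank_col_mx_row.
rewrite (bigID (fun u => (u <= C)%MS)) /=.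
by congr (_ + _); case: eqP => [<-|ne]; rewrite ?mul1r ?mul0r;
  [apply: eq_bigl | apply: big_pred0 | apply: eq_bigl | apply: big_pred0] => u;
  case: (u <= C)%MS; rewrite /= ?addn0 ?addn1 ?eqxx ?andbT ?andbF //;
  apply/negbTE/eqP.
Qed.

Lemma sum_col_pairs n m (G : 'M[F]_(n + 1, m) -> rat) :
  \sum_(B : 'M[F]_(n + 1, m)) G B =
  \sum_(C : 'M[F]_(n, m)) \sum_(u : 'rV[F]_m) G (col_mx C u).
Proof.
rewrite (reindex (fun p : 'M[F]_(n, m) * 'rV[F]_m => col_mx p.1 p.2)) /=.
  by rewrite -(pair_big xpredT xpredT (fun C u => G (col_mx C u))).
exists (fun B : 'M[F]_(n + 1, m) => (usubmx B, dsubmx B)) => [[C u] _ | B _] /=.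
  by rewrite col_mxKu col_mxKd.
by rewrite vsubmxK.
Qed.

Lemma sum_row_pairs n m m' (G : 'M[F]_(n, m + m') -> rat) :
  \sum_(B : 'M[F]_(n, m + m')) G B =
  \sum_(A : 'M[F]_(n, m)) \sum_(x : 'M[F]_(n, m')) G (row_mx A x).
Proof.
rewrite (reindex (fun p : 'M[F]_(n, m) * 'M[F]_(n, m') => row_mx p.1 p.2)) /=.
  by rewrite -(pair_big xpredT xpredT (fun A x => G (row_mx A x))).
exists (fun B : 'M[F]_(n, m + m') => (lsubmx B, rsubmx B)) => [[A x] _ | B _] /=.
  by rewrite row_mxKl row_mxKr.
by rewrite hsubmxK.
Qed.

Lemma sum_last_col0 n m (f : 'M[F]_(n, m + 1) -> rat) :
  \sum_(C : 'M[F]_(n, m + 1)) (if col (rshift m ord0) C == 0 then f C else 0) =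
  \sum_(A : 'M[F]_(n, m)) f (row_mx A 0).
Proof.
rewrite sum_row_pairs; apply: eq_bigr => A _.
by under eq_bigr do rewrite colKr col_id; rewrite -big_mkcond big_pred1_eq.
Qed.

Lemma sum_rank_append n m (k : nat) (g : 'M[F]_(n, m) -> rat) :
  \sum_(B : 'M[F]_(n + 1, m) | \rank B == k) g (usubmx B) =
  (q ^ k)%:R * \sum_(A : 'M[F]_(n, m) | \rank A == k) g A +
  (if k is k'.+1 then
     ((q ^ m)%:R - (q ^ k')%:R) * \sum_(A : 'M[F]_(n, m) | \rank A == k') g A
   else 0).
Proof.
rewrite big_mkcond sum_col_pairs /=.
under eq_bigr => C _.
  under eq_bigr do rewrite col_mxKu.
  rewrite -big_mkcond sum_rank_col_mx !sumr_const_pred.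
  rewrite card_rowspace card_not_rowspace natrB ?leq_exp2l ?rank_leq_col ?finNzRing_gt1 //.
  over.
rewrite big_split /= [in RHS]mulr_sumr [in RHS]sum_pred_weight; congr (_ + _).
  by apply: eq_bigr => A _; case: eqP => [->|_]; rewrite ?mul0r ?mulr0 // !mul1r mulrC.
case: k => [|k].
  by rewrite big1 // => A _; rewrite mul0r.
rewrite [in RHS]mulr_sumr [in RHS]sum_pred_weight; apply: eq_bigr => A _.
by rewrite eqSS; case: eqP => [->|_]; rewrite ?mul0r ?mulr0 // !mul1r mulrC.
Qed.

End RowSpaces.

(* The partial trace and the character-type sum of q [trace = 0] - 1. *)
Section TraceBias.
Variable F : finFieldType.
Local Notation q := #|F|.

Definition ptrace p n m (A : 'M[F]_(n, m)) : F :=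
  \sum_(i < n) \sum_(j < m) (if ((i : nat) == j) && (i < p)%N then A i j else 0).

Lemma ptrace_tr p n m (A : 'M[F]_(n, m)) : ptrace p A^T = ptrace p A.
Proof.
rewrite /ptrace exchange_big /=; apply: eq_bigr => i _; apply: eq_bigr => j _.
rewrite mxE; case: (eqVneq (i : nat) j) => [->|ne] //=;
  by rewrite eq_sym (negbTE ne).
Qed.

Lemma ptrace_col_mx p n m (A : 'M[F]_(n, m)) (u : 'rV[F]_m) : (p <= n)%N ->
  ptrace p (col_mx A u) = ptrace p A.
Proof.
move=> pn; rewrite /ptrace big_split_ord /= big_ord1 /=.
rewrite [X in _ + X]big1 ?addr0 => [|j _]; last first.
  by rewrite ltnNge (leq_trans pn) ?leq_addr // andbF.
by apply: eq_bigr => i _; apply: eq_bigr => j _; rewrite col_mxEu.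
Qed.

Lemma ptrace_row_mx p n m m' (A : 'M[F]_(n, m)) (x : 'M[F]_(n, m')) : (n <= m)%N ->
  ptrace p (row_mx A x) = ptrace p A.
Proof.
move=> nm; rewrite /ptrace; apply: eq_bigr => i _.
rewrite big_split_ord /= [X in _ + X]big1 ?addr0 => [|j _]; last first.
  case: eqP => //= e; move: (ltn_ord i); rewrite e.
  by rewrite ltnNge (leq_trans nm) ?leq_addr.
by apply: eq_bigr => j _; rewrite row_mxEl.
Qed.

Lemma ptrace_col_mx_last p (C : 'M[F]_(p, p + 1)) (u : 'rV[F]_(p + 1)) :
  ptrace (p + 1) (col_mx C u) = ptrace p C + u 0 (rshift p ord0).
Proof.
rewrite /ptrace big_split_ord /= big_ord1 /=; congr (_ + _).
  apply: eq_bigr => i _; apply: eq_bigr => j _.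
  by rewrite col_mxEu /= ltn_ord (ltn_addr _ (ltn_ord i)).
have p_lt : (p < p + 1)%N by rewrite addn1.
rewrite big_split_ord /= big_ord1 /= addn0 eqxx p_lt /=.
rewrite big1 ?add0r => [|j _]; first by rewrite col_mxEd.
by rewrite eq_sym (ltn_eqF (ltn_ord j)).
Qed.

(* q [a = 0] - 1; its sum over all a in F vanishes. *)
Definition zero_bias (a : F) : rat := q%:R * (a == 0)%:R - 1.

(* If column j of C is nonzero, the row space of C contains a vector v with
   v_j = 1; translating by a multiple of v shows that every value of the
   j-th coordinate is taken equally often on the row space. *)
Lemma card_rowspace_fibre_le n m (C : 'M[F]_(n, m)) (j : 'I_m) (a b : F) :
  col j C != 0 ->
  (#|[set u : 'rV[F]_m | (u <= C)%MS && (u ord0 j == b)]| <=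
   #|[set u : 'rV[F]_m | (u <= C)%MS && (u ord0 j == a)]|)%N.
Proof.
move=> /eqP nz.
have [i nzi] : exists i, C i j != 0.
  case: (pickP (fun i => C i j != 0)) => [i ?|h]; first by exists i.
  by case: nz; apply/colP => i; rewrite !mxE; have /negbFE/eqP := h i.
pose v := (C i j)^-1 *: row i C.
have vj : v ord0 j = 1 by rewrite !mxE mulVf.
rewrite -(card_imset _ (addIr ((a - b) *: v))).
apply/subset_leq_card/subsetP => w /imsetP [u]; rewrite inE => /andP [uC /eqP ub] ->.
rewrite inE addmx_sub ?scalemx_sub ?row_sub //= mxE [X in _ + X]mxE ub vj mulr1.
by rewrite addrC subrK.
Qed.

Lemma sum_rowspace_bias n m (C : 'M[F]_(n, m)) (j : 'I_m) (t : F) : col j C != 0 ->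
  \sum_(u : 'rV[F]_m | (u <= C)%MS) zero_bias (t + u ord0 j) = 0.
Proof.
move=> nz.
pose f a := #|[set u : 'rV[F]_m | (u <= C)%MS && (u ord0 j == a)]|.
have f_const a : f a = f (- t).
  by apply/eqP; rewrite eqn_leq !card_rowspace_fibre_le.
have card_C : (q ^ \rank C)%N = (q * f (- t))%N.
  rewrite -card_rowspace -sum1dep_card.
  rewrite (partition_big (fun u : 'rV[F]_m => u ord0 j) xpredT) //=.
  rewrite (eq_bigr (fun _ => f (- t))) => [|a _]; last first.
    by rewrite sum1dep_card -(f_const a).
  by rewrite sum_nat_const; congr (_ * _)%N; exact: eq_card.
rewrite big_split /= sumrN -mulr_sumr.
rewrite (eq_bigr (fun u : 'rV[F]_m => if t + u ord0 j == 0 then 1 else 0));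
  last by move=> u _; case: eqP.
rewrite -big_mkcondr /= !sumr_const_pred !mul1r.
rewrite (eq_card (B := [set u : 'rV[F]_m | (u <= C)%MS && (u ord0 j == - t)])).
  by rewrite -/(f (- t)) card_rowspace card_C natrM subrr.
by move=> u; rewrite !inE addrC addr_eq0.
Qed.

Lemma rowspace_col0 n m (C : 'M[F]_(n, m)) j (u : 'rV[F]_m) :
  col j C = 0 -> (u <= C)%MS -> u ord0 j = 0.
Proof.
move=> C0 /submxP [D ->]; rewrite mxE big1 // => i _.
have : col j C i ord0 = 0 by rewrite C0 mxE.
by rewrite mxE => ->; rewrite mulr0.
Qed.

Lemma sum_bias_all_rows m (j : 'I_m) (t : F) :
  \sum_(u : 'rV[F]_m) zero_bias (t + u ord0 j) = 0.
Proof.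
rewrite -[RHS](@sum_rowspace_bias m m 1%:M j t).
  by apply: eq_bigl => u; rewrite submx1.
by apply/eqP => /colP /(_ j) /eqP; rewrite !mxE eqxx oner_eq0.
Qed.

Lemma sum_bias_append_row n m (C : 'M[F]_(n, m)) (j : 'I_m) (t : F) (k : nat) :
  \sum_(u : 'rV[F]_m | \rank (col_mx C u) == k) zero_bias (t + u ord0 j) =
  if col j C == 0 then
    ((\rank C == k)%:R - ((\rank C).+1 == k)%:R) * (q ^ \rank C)%:R * zero_bias t
  else 0.
Proof.
have split_all := sum_bias_all_rows j t.
rewrite (bigID (fun u => (u <= C)%MS)) /= in split_all.
have sum_out : \sum_(u : 'rV[F]_m | ~~ (u <= C)%MS) zero_bias (t + u ord0 j) =
               - \sum_(u : 'rV[F]_m | (u <= C)%MS) zero_bias (t + u ord0 j).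
  by apply/eqP; rewrite -addr_eq0 addrC split_all.
rewrite sum_rank_col_mx sum_out.
have [C0|nz] := eqVneq (col j C) 0; last by rewrite sum_rowspace_bias // oppr0 !mulr0 addr0.
rewrite (eq_bigr (fun _ => zero_bias t)) => [|u uC]; last first.
  by rewrite (rowspace_col0 C0 uC) addr0.
by rewrite sumr_const_pred card_rowspace; ring.
Qed.

Definition trace_bias p n m (k : nat) : rat :=
  \sum_(A : 'M[F]_(n, m) | \rank A == k) zero_bias (ptrace p A).

Definition rank_count n m (k : nat) : rat := \sum_(A : 'M[F]_(n, m) | \rank A == k) 1.

Lemma trace_bias_tr p n m k : trace_bias p n m k = trace_bias p m n k.
Proof.
rewrite /trace_bias (reindex (@trmx F m n)) /=.
  by apply: eq_big => [A|A _]; rewrite ?mxrank_tr ?ptrace_tr.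
by exists (@trmx F n m) => A _; rewrite trmxK.
Qed.

Lemma trace_bias_append p n m k : (p <= n)%N ->
  trace_bias p (n + 1) m k = (q ^ k)%:R * trace_bias p n m k +
  (if k is k'.+1 then ((q ^ m)%:R - (q ^ k')%:R) * trace_bias p n m k' else 0).
Proof.
move=> pn; rewrite /trace_bias -sum_rank_append; apply: eq_bigr => B _.
by rewrite -{1}(vsubmxK B) ptrace_col_mx.
Qed.

Lemma rank_count_append n m k :
  rank_count (n + 1) m k = (q ^ k)%:R * rank_count n m k +
  (if k is k'.+1 then ((q ^ m)%:R - (q ^ k')%:R) * rank_count n m k' else 0).
Proof. exact: (sum_rank_append _ (fun _ => 1)). Qed.

Lemma trace_bias_square_step p k :
  trace_bias (p + 1) (p + 1) (p + 1) k = (q ^ k)%:R * trace_bias p p p k -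
    (if k is k'.+1 then (q ^ k')%:R * trace_bias p p p k' else 0).
Proof.
rewrite /trace_bias big_mkcond sum_col_pairs /=.
under eq_bigr => C _.
  rewrite -big_mkcond /=.
  under eq_bigr do rewrite ptrace_col_mx_last.
  rewrite sum_bias_append_row.
  over.
rewrite sum_last_col0.
under [LHS]eq_bigr do rewrite rank_row_mx0 ptrace_row_mx // !mulrBl.
rewrite sumrB [in RHS]mulr_sumr [in RHS]sum_pred_weight; congr (_ - _).
  by apply: eq_bigr => A _; case: eqP => [->|_]; rewrite ?mul0r ?mulr0 // !mul1r.
case: k => [|k]; first by rewrite big1 // => A _; rewrite !mul0r.
rewrite [in RHS]mulr_sumr [in RHS]sum_pred_weight; apply: eq_bigr => A _.
by rewrite eqSS; case: eqP => [->|_]; rewrite ?mul0r ?mulr0 // !mul1r.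
Qed.
End TraceBias.

Section ClosedForms.
Variable F : finFieldType.
Local Notation q := #|F|.
Local Notation x := (#|F|%:R : rat).
Let q_gt1 : (1 < q)%N := finNzRing_gt1 F.

Definition trace_bias_closed r k : rat :=
  (x - 1) * (-1) ^+ k * x ^+ 'C(k, 2) * gbinom q r k.

Lemma rank_empty_mx n m (A : 'M[F]_(n, m)) : (n * m = 0)%N -> \rank A = 0%N.
Proof.
move=> /eqP; rewrite muln_eq0 => /orP [] /eqP e; move: A; rewrite e => A;
  by apply/eqP; rewrite -leqn0 ?rank_leq_row ?rank_leq_col.
Qed.

Lemma sum_empty_mx n m (G : 'M[F]_(n, m) -> rat) c : (n * m = 0)%N ->
  (forall A, G A = c) -> \sum_(A : 'M[F]_(n, m)) G A = c.
Proof.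
move=> nm G_c; rewrite (eq_bigr (fun _ => c)) // sumr_const card_mx nm expn0.
by rewrite mulr1n.
Qed.

Lemma trace_bias_empty k : trace_bias F 0 0 0 k = (k == 0)%:R * (x - 1).
Proof.
rewrite /trace_bias big_mkcond /=; apply: sum_empty_mx => // A.
rewrite rank_empty_mx // /ptrace big_ord0.
by case: k => [|k] /=; rewrite /zero_bias ?eqxx ?mul1r ?mulr1 ?mul0r.
Qed.

Lemma trace_bias_square p k : trace_bias F p p p k = trace_bias_closed p k.
Proof.
elim: p k => [|p IH] k.
  rewrite trace_bias_empty /trace_bias_closed; case: k => [|k].
    by rewrite gbinom0 // expr0 bin0n expr0 !mulr1 mul1r.
  by rewrite gbinom_gt // mulr0 mul0r.
rewrite -addn1 trace_bias_square_step; case: k => [|k]; rewrite !IH /trace_bias_closed.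
  by rewrite !gbinom0 // expr0 subr0 mul1r.
rewrite addn1 gbinom_pascal // binS bin1 !natrX !exprS exprD.
by move: (gbinom q p k.+1) (gbinom q p k) => G1 G0; ring.
Qed.

Lemma trace_bias_tall r a k : trace_bias F r (r + a) r k = trace_bias_closed r k.
Proof.
elim: a k => [|a IH] k; first by rewrite addn0 trace_bias_square.
rewrite addnS -addn1 trace_bias_append ?leq_addr //; case: k => [|k]; rewrite !IH.
  by rewrite expn0 mul1r addr0.
case: (leqP k r) => kr; last first.
  by rewrite /trace_bias_closed !gbinom_gt ?mulr0 ?addr0 // ltnW.
have := gbinom_ratio q_gt1 r k; have := qpow_sub1_neq0 q_gt1 (ltn0Sn k).
rewrite /trace_bias_closed !natrX.
have -> : x ^+ r = x ^+ k * x ^+ (r - k) by rewrite -exprD subnKC.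
rewrite binS bin1 !exprS exprD.
move: (gbinom q r k.+1) (gbinom q r k) (x ^+ k) (x ^+ (r - k)) (x ^+ 'C(k, 2)).
move=> G1 G0 X Y Z X1 ratio.
have -> : G1 = (Y - 1) * G0 / (x * X - 1) by rewrite -ratio mulrC mulrA mulVf // mul1r.
by field.
Qed.

Lemma trace_bias_wide r m k : (r <= m)%N -> trace_bias F r r m k = trace_bias_closed r k.
Proof. by move=> rm; rewrite trace_bias_tr -(subnKC rm) trace_bias_tall. Qed.

Lemma rank_count_closed n m k : rank_count F n m k = gbinom q n k * qfall q m k.
Proof.
elim: n k => [|n IH] k.
  rewrite /rank_count big_mkcond /=; apply: sum_empty_mx => // A.
  rewrite rank_empty_mx //; case: k => [|k] /=.
    by rewrite gbinom0 // /qfall big_ord0 mulr1.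
  by rewrite gbinom_gt // mul0r.
rewrite -addn1 rank_count_append; case: k => [|k]; rewrite !IH.
  by rewrite !gbinom0 // expn0 mulr1n !mul1r addr0.
rewrite addn1 gbinom_pascal // qfallS !natrX.
by move: (gbinom q n k.+1) (gbinom q n k) (qfall q m k) => G1 G0 P; ring.
Qed.
End ClosedForms.

Section TopRows.
Variable F : finFieldType.
Local Notation q := #|F|.
Local Notation x := (#|F|%:R : rat).
Let q_gt1 : (1 < q)%N := finNzRing_gt1 F.
Variables (r m s : nat).

Definition nz_trace_count : rat :=
  \sum_(N : 'M[F]_(r, m) | \rank N == s) (ptrace r N != 0)%:R.

Lemma nz_trace_countE :
  nz_trace_count = ((x - 1) * rank_count F r m s - trace_bias F r r m s) / x.
Proof.
have x_neq0 : x != 0 by rewrite pnatr_eq0 -lt0n ltnW.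
apply: (canRL (mulfK x_neq0)).
rewrite /nz_trace_count /rank_count /trace_bias mulr_suml mulr_sumr -sumrB.
by apply: eq_bigr => N _; rewrite /zero_bias; case: (ptrace r N == 0) => /=; ring.
Qed.

(* The first r rows of an n x m matrix, without a proof of r <= n. *)
Definition top_part n (M : 'M[F]_(n, m)) : 'M[F]_(r, m) :=
  \matrix_(i < r, j < m) oapp (fun i' : 'I_n => M i' j) 0 (insub (i : nat)).

Lemma top_partE n (h : (r <= n)%N) (M : 'M[F]_(n, m)) : top_part M = top_rows h M.
Proof.
apply/matrixP => i j; rewrite /top_rows !mxE.
case: insubP => [i' _ ei|]; last by rewrite (leq_trans (ltn_ord i) h).
by congr (M _ j); apply: val_inj; rewrite ei.
Qed.

Lemma top_part_id (M : 'M[F]_(r, m)) : top_part M = M.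
Proof.
apply/matrixP => i j; rewrite mxE.
by case: insubP => [i' _ ei|]; [congr (M _ j); apply: val_inj | rewrite ltn_ord].
Qed.

Lemma top_part_col_mx n (h : (r <= n)%N) (M : 'M[F]_(n, m)) (u : 'rV[F]_m) :
  top_part (col_mx M u) = top_part M.
Proof.
have h' : (r <= n + 1)%N by rewrite (leq_trans h) ?leq_addr.
rewrite (top_partE h') (top_partE h); apply/matrixP => i j.
rewrite /top_rows [LHS]mxE [RHS]mxE.
have -> : widen_ord h' i = lshift 1 (widen_ord h i) by apply: val_inj.
by rewrite col_mxEu.
Qed.

Definition top_weight (N : 'M[F]_(r, m)) : rat :=
  ((\rank N == s) && (ptrace r N != 0))%:R.

Definition wsum n (t : nat) : rat :=
  \sum_(M : 'M[F]_(n, m) | \rank M == t) top_weight (top_part M).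

Lemma wsum_append n t : (r <= n)%N ->
  wsum (n + 1) t = (q ^ t)%:R * wsum n t +
  (if t is t'.+1 then ((q ^ m)%:R - (q ^ t')%:R) * wsum n t' else 0).
Proof.
move=> h; rewrite /wsum -(sum_rank_append _ (fun M => top_weight (top_part M))).
by apply: eq_bigr => B _; rewrite -{1}(vsubmxK B) (top_part_col_mx h).
Qed.

Lemma wsum_base t : wsum r t = (t == s)%:R * nz_trace_count.
Proof.
rewrite /wsum /nz_trace_count; under eq_bigr do rewrite top_part_id.
case: eqP => [->|ne]; rewrite ?mul1r ?mul0r.
  by apply: eq_bigr => N rk; rewrite /top_weight rk.
by apply: big1 => N /eqP rk; rewrite /top_weight rk; case: eqP.
Qed.

Lemma wsum_closed a t : (s <= m)%N ->
  wsum (r + a) t = if (s <= t)%N then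
    nz_trace_count * x ^+ (s * a) * gbinom q a (t - s) * qfall q (m - s) (t - s)
  else 0.
Proof.
move=> s_le_m; elim: a t => [|a IH] t.
  rewrite addn0 wsum_base; case: leqP => [st|ts]; last by rewrite (ltn_eqF ts) mul0r.
  case: (eqVneq t s) => [->|ne].
    by rewrite subnn gbinom0 // /qfall big_ord0 muln0 expr0 !mulr1 mul1r.
  by rewrite mul0r gbinom_gt ?mulr0 ?mul0r // subn_gt0 ltn_neqAle eq_sym ne.
rewrite addnS -addn1 wsum_append ?leq_addr //.
case: (ltngtP t s) => [ts|st|->].
- case: t ts => [|t] ts; rewrite !IH leqNgt ts ?mulr0 ?addr0 //.
  by rewrite leqNgt (ltn_trans (ltnSn t) ts) mulr0 addr0.
- case: t st => [//|t] st; rewrite !IH (ltnW st) -ltnS st subSn //.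
  rewrite gbinom_pascal // qfallS !natrX mulnS exprD !exprS.
  have -> : x ^+ t = x ^+ s * x ^+ (t - s) by rewrite -exprD subnKC.
  have -> : x ^+ m = x ^+ s * x ^+ (m - s) by rewrite -exprD subnKC.
  move: (gbinom q a (t - s).+1) (gbinom q a (t - s)) (qfall q (m - s) (t - s)).
  move: (x ^+ s) (x ^+ (t - s)) (x ^+ (m - s)) (x ^+ (s * a)) => Xs Xd Xm Xa G1 G0 P.
  by ring.
- rewrite IH leqnn subnn !gbinom0 // /qfall big_ord0 !mulr1 natrX mulnS exprD.
  case: s s_le_m IH => [|s'] _ IH; last rewrite IH ltnn mulr0.
  all: by rewrite addr0 mulrCA.
Qed.
End TopRows.

Lemma tau_ptrace (F : finFieldType) (r l m : nat) (hr : (r <= l)%N) (hrm : (r <= m)%N)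
  (M : 'M[F]_(l, m)) : tau hr hrm M = ptrace r (top_rows hr M).
Proof.
rewrite /tau /ptrace; apply: eq_bigr => i _; rewrite (bigD1 (widen_ord hrm i)) //=.
rewrite eqxx ltn_ord /top_rows mxE big1 ?addr0 // => j ji.
by case: eqP => // e; case/eqP: ji; apply: val_inj; rewrite /= e.
Qed.

Lemma wcount_wsum (F : finFieldType) (r s t l m : nat)
  (hr : (r <= l)%N) (hrm : (r <= m)%N) :
  ((wcount F s t hr hrm)%:R : rat) = wsum F r m s l t.
Proof.
rewrite /wcount /wsum -[LHS]mul1r -sumr_const_pred big_mkcondr /=.
apply: eq_bigr => M _; rewrite (top_partE hr) /top_weight tau_ptrace.
by case: (_ && _).
Qed.

Theorem mainTheorem16 (F : finFieldType) (r s t l m : nat)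
  (ht1 : (1 <= t)%N) (htl : (t <= l)%N) (hlm : (l <= m)%N)
  (hr1 : (1 <= r)%N) (hr : (r <= l)%N) (hrm : (r <= m)%N)
  (hs1 : (1 <= s)%N) (hst : (s <= t)%N) :
  let q := #|F| in
  ((wcount F s t hr hrm)%:R : rat) =
    (q%:R - 1) / q%:R * (q%:R ^+ 'C(s, 2))
    * (gfact q m / gfact q (m - t) - (-1) ^+ s * (gfact q (m - s) / gfact q (m - t)))
    * q%:R ^+ (s * (l - r)) * q%:R ^+ 'C(t - s, 2)
    * gbinom q r s * gbinom q (l - r) (t - s).
Proof.
move=> q; have q_gt1 : (1 < q)%N := finNzRing_gt1 F.
have s_le_m : (s <= m)%N by lia.
have -> : (wcount F s t hr hrm)%:R = wsum F r m s (r + (l - r)) t.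
  by rewrite wcount_wsum subnKC.
rewrite wsum_closed // hst nz_trace_countE rank_count_closed trace_bias_wide //.
rewrite /trace_bias_closed !qfallE //; last by lia.
have -> : (m - s - (t - s) = m - t)%N by lia.
have := gfact_neq0 q_gt1 (m - s); have := gfact_neq0 q_gt1 (m - t).
have : (q%:R : rat) != 0 by rewrite pnatr_eq0 -lt0n ltnW.
move: (gfact q (m - s)) (gfact q (m - t)) (gfact q m) (q%:R : rat).
move: (gbinom q r s) (gbinom q (l - r) (t - s)) => Brs Blr Gs Gt Gm X X0 Gt0 Gs0.
by field; rewrite ?X0 ?Gt0 ?Gs0.
Qed.
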